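(* Let $g_1=(y^2+x)\,dx\,dy$, $g_2=-2\frac{y^2+x}{y^3}dx\,dy+\frac{(y^2+x)^2}{y^4}dy^2$, $g_3=\frac{y^2+x}{(3x-y^2)^6}\big(9(y^2+x)dx^2-4y(9x+y^2)dx\,dy+12x(y^2+x)dy^2\big)$. Let $(u,v)\mapsto(x(u,v),y(u,v))$ be a local diffeomorphism such that for each $i\in\{1,2,3\}$ the pullback of $g_i$ (written in $(x,y)$) equals $\mu_i\,g_i$ written in the coordinates $(u,v)$, for some constants $\mu_i\ne0$. Then there is $k\in\mathbb R\setminus\{0\}$ with $x=k^2u$ and $y=kv$.
   Context: $dx\,dy$ denotes the symmetric product. The metrics $g_1,g_2,g_3$ are projectively equivalent and their Liouville tensors are eigenvectors of the Lie derivative along the projective vector field $w=2x\partial_x+y\partial_y$, with $\mathcal L_wg_1=5g_1$, $\mathcal L_wg_2=2g_2$, $\mathcal L_wg_3=-4g_3$. *)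

From Stdlib Require Import Reals.
Open Scope R_scope.

(* A symmetric 2-tensor on R^2 at a point, by its components
   (g11, g12, g22) in the coordinate basis:
   g = g11 dx^2 + 2 g12 dx dy + g22 dy^2,
   where dx dy denotes the symmetric product (1/2)(dx(x)dy + dy(x)dx). *)
Definition sym2 : Type := (R * R * R)%type.
Definition metric2 : Type := R -> R -> sym2.

Definition mk (e f g : R) : sym2 := (e, f, g).
Definition c11 (s : sym2) : R := fst (fst s).
Definition c12 (s : sym2) : R := snd (fst s).
Definition c22 (s : sym2) : R := snd s.

Definition g1 : metric2 := fun x y =>
  mk 0 ((y^2 + x) / 2) 0.

Definition g2 : metric2 := fun x y =>
  mk 0 (- (y^2 + x) / y^3) ((y^2 + x)^2 / y^4).

Definition g3 : metric2 := fun x y =>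
  let f := (y^2 + x) / (3*x - y^2)^6 in
  mk (f * (9 * (y^2 + x))) (f * (- 2 * y * (9*x + y^2))) (f * (12 * x * (y^2 + x))).

Definition scale2 (m : R) (s : sym2) : sym2 := mk (m * c11 s) (m * c12 s) (m * c22 s).

(* Pullback of the tensor s (at the image point) by a linear map with
   Jacobian [[a, b], [c, d]] = [[dX/du, dX/dv], [dY/du, dY/dv]]. *)
Definition pull2 (s : sym2) (a b c d : R) : sym2 :=
  mk (c11 s * a * a + 2 * c12 s * a * c + c22 s * c * c)
     (c11 s * a * b + c12 s * (a * d + b * c) + c22 s * c * d)
     (c11 s * b * b + 2 * c12 s * b * d + c22 s * d * d).

Definition partial_u (f : R -> R -> R) (u v l : R) : Prop :=
  derivable_pt_lim (fun s => f s v) u l.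
Definition partial_v (f : R -> R -> R) (u v l : R) : Prop :=
  derivable_pt_lim (fun t => f u t) v l.

Definition open2 (U : R -> R -> Prop) : Prop :=
  forall u v, U u v -> exists r, 0 < r /\
    forall u' v', Rabs (u' - u) < r -> Rabs (v' - v) < r -> U u' v'.

Definition connected2 (U : R -> R -> Prop) : Prop :=
  forall A B : R -> R -> Prop, open2 A -> open2 B ->
    (forall u v, U u v -> A u v \/ B u v) ->
    (forall u v, U u v -> ~ (A u v /\ B u v)) ->
    (exists u v, U u v /\ A u v) ->
    (exists u v, U u v /\ B u v) -> False.

Definition cont2_on (U : R -> R -> Prop) (f : R -> R -> R) : Prop :=
  forall u v, U u v -> forall eps, 0 < eps -> exists delta, 0 < delta /\
    forall u' v', Rabs (u' - u) < delta -> Rabs (v' - v) < delta ->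
      Rabs (f u' v' - f u v) < eps.

Fixpoint Ck_on (k : nat) (U : R -> R -> Prop) (f : R -> R -> R) : Prop :=
  match k with
  | O => cont2_on U f
  | S k' => exists fu fv : R -> R -> R,
      (forall u v, U u v -> partial_u f u v (fu u v) /\ partial_v f u v (fv u v)) /\
      Ck_on k' U fu /\ Ck_on k' U fv
  end.

Definition smooth_on (U : R -> R -> Prop) (f : R -> R -> R) : Prop :=
  forall k, Ck_on k U f.

Definition local_diffeo_on (U : R -> R -> Prop) (X Y : R -> R -> R) : Prop :=
  smooth_on U X /\ smooth_on U Y /\
  forall u v a b c d, U u v ->
    partial_u X u v a -> partial_v X u v b ->
    partial_u Y u v c -> partial_v Y u v d ->
    a * d - b * c <> 0.

Definition pullback_eq (U : R -> R -> Prop) (X Y : R -> R -> R)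
    (g : metric2) (mu : R) : Prop :=
  forall u v a b c d, U u v ->
    partial_u X u v a -> partial_v X u v b ->
    partial_u Y u v c -> partial_v Y u v d ->
    pull2 (g (X u v) (Y u v)) a b c d = scale2 mu (g u v).

(* The pullback equations for g1 and g2 force the Jacobian to be diagonal: g1 alone
   allows the coordinate swap as well, which the dy^2 term of g2 excludes.  For a diagonal
   Jacobian diag(a, d) every pullback equation multiplies the dx dy and dy^2 coefficients
   by a d and d^2, so their cross-multiplied ratio is invariant.  Together with the dx dy
   coefficients of g1 and g2 this gives, wherever g1 is nondegenerate,
   mu2 Y^3 = mu1 v^3 (from g1, g2), a (v^2+u) Y = d (Y^2+X) v (from g2) and then
   X v^2 = Y^2 u (from g3).  Hence Y = k v and X = k^2 u for the real cube root k of
   mu1/mu2, and the degenerate line v^2 + u = 0 follows by continuity. *)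

From Stdlib Require Import Reals Lra Classical.
Open Scope R_scope.

Lemma mk_inj e f g e' f' g' : mk e f g = mk e' f' g' -> e = e' /\ f = f' /\ g = g'.
Proof. unfold mk; intro H; injection H; auto. Qed.

Lemma pull2_diag (s : sym2) (a d : R) :
  pull2 s a 0 0 d = mk (c11 s * a * a) (c12 s * a * d) (c22 s * d * d).
Proof. unfold pull2, mk; f_equal; [f_equal|]; ring. Qed.

Lemma pull2_diag_ratio (s t : sym2) (a d mu : R) : mu <> 0 -> d <> 0 ->
  pull2 s a 0 0 d = scale2 mu t -> a * c12 s * c22 t = d * c22 s * c12 t.
Proof.
  intros hmu hd E; rewrite pull2_diag in E.
  destruct (mk_inj _ _ _ _ _ _ E) as [_ [E12 E22]].
  apply (Rmult_eq_reg_l (mu * d)); [| now apply Rmult_integral_contrapositive_currified].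
  transitivity ((c12 s * a * d) * (mu * c22 t)); [ring|].
  rewrite <- E22, E12; ring.
Qed.

Lemma pullback_g1_g2_diagonal (x y u v a b c d mu1 mu2 : R) :
  v <> 0 -> v ^ 2 + u <> 0 -> a * d - b * c <> 0 -> mu1 <> 0 -> mu2 <> 0 ->
  pull2 (g1 x y) a b c d = scale2 mu1 (g1 u v) ->
  pull2 (g2 x y) a b c d = scale2 mu2 (g2 u v) -> b = 0 /\ c = 0.
Proof.
  intros hv hP hdet hmu1 hmu2 E1 E2.
  unfold pull2, scale2, g1, g2 in E1, E2.
  destruct (mk_inj _ _ _ _ _ _ E1) as [E1a [E1b E1c]].
  destruct (mk_inj _ _ _ _ _ _ E2) as [_ [_ E2c]].
  unfold c11, c12, c22, mk in *; cbn [fst snd] in *.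
  assert (hQ : y ^ 2 + x <> 0).
  { intro hQ; apply hP, (Rmult_eq_reg_l mu1); [|exact hmu1]; rewrite hQ in E1b; lra. }
  assert (Hac : a * c = 0) by (apply (Rmult_eq_reg_l (y ^ 2 + x)); lra).
  assert (Hbd : b * d = 0) by (apply (Rmult_eq_reg_l (y ^ 2 + x)); lra).
  destruct (Rmult_integral _ _ Hac) as [-> | ->].
  - (* the coordinate swap preserves g1 but not g2 *)
    exfalso.
    assert (Hd : d = 0).
    { destruct (Rmult_integral _ _ Hbd) as [-> | ]; [lra | assumption]. }
    subst d.
    assert (H : mu2 * (v ^ 2 + u) ^ 2 = 0).
    { transitivity (mu2 * ((v ^ 2 + u) ^ 2 / v ^ 4) * v ^ 4); [field; assumption|].
      rewrite <- E2c; ring. }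
    destruct (Rmult_integral _ _ H) as [|H']; [contradiction|].
    exact (pow_nonzero _ 2 hP H').
  - split; [|reflexivity].
    destruct (Rmult_integral _ _ Hbd) as [| ->]; [assumption | lra].
Qed.

(* From E : L = R, proves l = r when l = k * L and r = k * R are field identities. *)
Ltac by_scaling E k :=
  match type of E with ?L = ?R =>
    transitivity (k * L); [field | rewrite E; field]; repeat split; assumption
  end.

Lemma pullback_g1_diag (x y u v a d mu1 : R) :
  pull2 (g1 x y) a 0 0 d = scale2 mu1 (g1 u v) -> (y ^ 2 + x) * a * d = mu1 * (v ^ 2 + u).
Proof.
  rewrite pull2_diag; intro E.
  destruct (mk_inj _ _ _ _ _ _ E) as [_ [E12 _]].
  unfold g1, c12, mk in E12; cbn [fst snd] in E12.
  by_scaling E12 2.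
Qed.

Lemma pullback_g1_g2_diag_scale (x y u v a d mu1 mu2 : R) :
  y <> 0 -> v <> 0 -> v ^ 2 + u <> 0 ->
  pull2 (g1 x y) a 0 0 d = scale2 mu1 (g1 u v) ->
  pull2 (g2 x y) a 0 0 d = scale2 mu2 (g2 u v) -> mu2 * y ^ 3 = mu1 * v ^ 3.
Proof.
  intros hy hv hP E1 E2.
  apply pullback_g1_diag in E1.
  rewrite pull2_diag in E2.
  destruct (mk_inj _ _ _ _ _ _ E2) as [_ [E12 _]].
  unfold g2, c12, mk in E12; cbn [fst snd] in E12.
  assert (H2 : (y ^ 2 + x) * a * d * v ^ 3 = mu2 * (v ^ 2 + u) * y ^ 3).
  { by_scaling E12 (- (y ^ 3 * v ^ 3)). }
  apply (Rmult_eq_reg_l (v ^ 2 + u)); [|exact hP].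
  transitivity ((y ^ 2 + x) * a * d * v ^ 3); [rewrite H2 | rewrite E1]; ring.
Qed.

Lemma pullback_g2_diag_ratio (x y u v a d mu2 : R) :
  y <> 0 -> v <> 0 -> y ^ 2 + x <> 0 -> v ^ 2 + u <> 0 -> mu2 <> 0 -> d <> 0 ->
  pull2 (g2 x y) a 0 0 d = scale2 mu2 (g2 u v) ->
  a * (v ^ 2 + u) * y = d * (y ^ 2 + x) * v.
Proof.
  intros hy hv hQ hP hmu hd E.
  apply pull2_diag_ratio in E; [|exact hmu|exact hd].
  unfold g2, c12, c22, mk in E; cbn [fst snd] in E.
  by_scaling E (- (y ^ 4 * v ^ 4) / ((y ^ 2 + x) * (v ^ 2 + u))).
Qed.

Lemma pullback_g3_diag_ratio (x y u v a d mu3 : R) :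
  y ^ 2 + x <> 0 -> v ^ 2 + u <> 0 -> 3 * x - y ^ 2 <> 0 -> 3 * u - v ^ 2 <> 0 ->
  mu3 <> 0 -> d <> 0 ->
  pull2 (g3 x y) a 0 0 d = scale2 mu3 (g3 u v) ->
  a * y * (9 * x + y ^ 2) * u * (v ^ 2 + u) = d * x * (y ^ 2 + x) * v * (9 * u + v ^ 2).
Proof.
  intros hQ hP hx hu hmu hd E.
  apply pull2_diag_ratio in E; [|exact hmu|exact hd].
  unfold g3, c12, c22, mk in E; cbn [fst snd] in E.
  by_scaling E (- (3 * x - y ^ 2) ^ 6 * (3 * u - v ^ 2) ^ 6 / (24 * (y ^ 2 + x) * (v ^ 2 + u))).
Qed.

Lemma pullback_relations (x y u v a b c d mu1 mu2 mu3 : R) :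
  v <> 0 -> 3 * u - v ^ 2 <> 0 -> y <> 0 -> 3 * x - y ^ 2 <> 0 -> v ^ 2 + u <> 0 ->
  a * d - b * c <> 0 -> mu1 <> 0 -> mu2 <> 0 -> mu3 <> 0 ->
  pull2 (g1 x y) a b c d = scale2 mu1 (g1 u v) ->
  pull2 (g2 x y) a b c d = scale2 mu2 (g2 u v) ->
  pull2 (g3 x y) a b c d = scale2 mu3 (g3 u v) ->
  mu2 * y ^ 3 = mu1 * v ^ 3 /\ x * v ^ 2 = y ^ 2 * u.
Proof.
  intros hv hu hy hx hP hdet hmu1 hmu2 hmu3 E1 E2 E3.
  destruct (pullback_g1_g2_diagonal x y u v a b c d mu1 mu2) as [-> ->]; try assumption.
  assert (had : a * d <> 0) by (intro H; apply hdet; rewrite H; ring).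
  assert (ha : a <> 0) by (intro H; apply had; rewrite H; ring).
  assert (hd : d <> 0) by (intro H; apply had; rewrite H; ring).
  assert (hQ : y ^ 2 + x <> 0).
  { intro H. apply (Rmult_integral_contrapositive_currified mu1 (v ^ 2 + u) hmu1 hP).
    rewrite <- (pullback_g1_diag _ _ _ _ _ _ _ E1), H; ring. }
  split; [exact (pullback_g1_g2_diag_scale x y u v a d mu1 mu2 hy hv hP E1 E2)|].
  pose proof (pullback_g2_diag_ratio x y u v a d mu2 hy hv hQ hP hmu2 hd E2) as R2.
  pose proof (pullback_g3_diag_ratio x y u v a d mu3 hQ hP hx hu hmu3 hd E3) as R3.
  assert (H : d * (y ^ 2 + x) * v * ((9 * x + y ^ 2) * u)
              = d * (y ^ 2 + x) * v * (x * (9 * u + v ^ 2))).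
  { transitivity (a * (v ^ 2 + u) * y * ((9 * x + y ^ 2) * u)); [now rewrite R2|].
    transitivity (a * y * (9 * x + y ^ 2) * u * (v ^ 2 + u)); [ring|].
    rewrite R3; ring. }
  apply Rmult_eq_reg_l in H.
  - lra.
  - repeat apply Rmult_integral_contrapositive_currified; assumption.
Qed.

Lemma cube_inj (x y : R) : x ^ 3 = y ^ 3 -> x = y.
Proof.
  intro H.
  assert (F : (x - y) * ((x + y / 2) ^ 2 + 3 / 4 * y ^ 2) = 0).
  { transitivity (x ^ 3 - y ^ 3); [field | rewrite H; ring]. }
  destruct (Rmult_integral _ _ F) as [|G]; [lra|].
  pose proof (pow2_ge_0 (x + y / 2)); pose proof (pow2_ge_0 y).
  assert (Hy : y = 0) by (apply Rsqr_0_uniq; unfold Rsqr; lra).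
  subst y; apply Rsqr_0_uniq; unfold Rsqr; lra.
Qed.

Lemma eq_at_of_eq_right (f g : R -> R) (x r : R) :
  continuity_pt f x -> continuity_pt g x -> 0 < r ->
  (forall e, 0 < e < r -> f (x + e) = g (x + e)) -> f x = g x.
Proof.
  intros hf hg hr Hfg.
  apply Rminus_diag_uniq; apply NNPP; intro hne.
  destruct (continuous_neq_0 (f - g)%F x (continuity_pt_minus _ _ _ hf hg) hne)
    as [eps Heps].
  set (e := Rmin eps r / 2).
  assert (he : 0 < e < r /\ Rabs e < eps).
  { pose proof (cond_pos eps); pose proof (Rmin_l eps r); pose proof (Rmin_r eps r).
    pose proof (Rmin_pos eps r (cond_pos eps) hr).
    unfold e; rewrite Rabs_pos_eq; lra. }
  apply (Heps e); [tauto|]. unfold minus_fct. rewrite Hfg by tauto. ring.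
Qed.

Lemma open2_right (U : R -> R -> Prop) (u v : R) :
  open2 U -> U u v -> exists r, 0 < r /\ forall e, 0 < e < r -> U (u + e) v.
Proof.
  intros hU huv. destruct (hU u v huv) as [r [hr Hr]].
  exists r; split; [exact hr|]. intros e he. apply Hr.
  - replace (u + e - u) with e by ring. rewrite Rabs_pos_eq; lra.
  - rewrite Rminus_diag, Rabs_R0; lra.
Qed.

Lemma smooth_partials (U : R -> R -> Prop) (f : R -> R -> R) (u v : R) :
  smooth_on U f -> U u v -> exists a b, partial_u f u v a /\ partial_v f u v b.
Proof.
  intros hf huv. destruct (hf 1%nat) as [fu [fv [H _]]].
  exists (fu u v), (fv u v). exact (H u v huv).
Qed.

Lemma partial_u_continuity_pt (f : R -> R -> R) (u v l : R) :
  partial_u f u v l -> continuity_pt (fun s => f s v) u.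
Proof. intro H. exact (derivable_continuous_pt _ _ (exist _ l H)). Qed.

Section Rigidity.

Variables (U : R -> R -> Prop) (X Y : R -> R -> R) (mu1 mu2 mu3 : R).
Hypothesis U_open : open2 U.
Hypothesis diffeo : local_diffeo_on U X Y.
Hypothesis domain : forall u v, U u v ->
  v <> 0 /\ 3 * u - v ^ 2 <> 0 /\ Y u v <> 0 /\ 3 * X u v - (Y u v) ^ 2 <> 0.
Hypotheses (mu1_neq0 : mu1 <> 0) (mu2_neq0 : mu2 <> 0) (mu3_neq0 : mu3 <> 0).
Hypotheses (pullback_g1 : pullback_eq U X Y g1 mu1)
  (pullback_g2 : pullback_eq U X Y g2 mu2) (pullback_g3 : pullback_eq U X Y g3 mu3).

Lemma relations_off_singular (u v : R) : U u v -> v ^ 2 + u <> 0 ->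
  mu2 * Y u v ^ 3 = mu1 * v ^ 3 /\ X u v * v ^ 2 = Y u v ^ 2 * u.
Proof.
  intros huv hP. destruct diffeo as [hX [hY hdet]].
  destruct (smooth_partials U X u v hX huv) as [a [b [ha hb]]].
  destruct (smooth_partials U Y u v hY huv) as [c [d [hc hd]]].
  destruct (domain u v huv) as [hv [hu [hy hx]]].
  apply (pullback_relations _ _ _ _ a b c d mu1 mu2 mu3); auto.
  exact (hdet u v a b c d huv ha hb hc hd).
Qed.

Lemma dilation_off_singular (k u v : R) : mu2 * k ^ 3 = mu1 -> U u v -> v ^ 2 + u <> 0 ->
  X u v = k ^ 2 * u /\ Y u v = k * v.
Proof.
  intros hk huv hP. destruct (domain u v huv) as [hv _].
  destruct (relations_off_singular u v huv hP) as [Ey Ex].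
  assert (hY : Y u v = k * v).
  { replace (Y u v) with (Y u v / v * v) by (field; exact hv). f_equal.
    apply cube_inj, (Rmult_eq_reg_l mu2); [|exact mu2_neq0].
    rewrite hk. by_scaling Ey (/ v ^ 3). }
  split; [|exact hY].
  apply (Rmult_eq_reg_r (v ^ 2)); [|exact (pow_nonzero v 2 hv)].
  rewrite Ex, hY; ring.
Qed.

Lemma dilation_on (k : R) : mu2 * k ^ 3 = mu1 ->
  forall u v, U u v -> X u v = k ^ 2 * u /\ Y u v = k * v.
Proof.
  intros hk u v huv.
  destruct (Req_dec (v ^ 2 + u) 0) as [hP | hP]; [|exact (dilation_off_singular k u v hk huv hP)].
  destruct (open2_right U u v U_open huv) as [r [hr Hr]].
  assert (Hright : forall e, 0 < e < r ->
            X (u + e) v = k ^ 2 * (u + e) /\ Y (u + e) v = k * v).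
  { intros e he. apply dilation_off_singular; [exact hk | exact (Hr e he) | lra]. }
  destruct diffeo as [hX [hY _]].
  destruct (smooth_partials U X u v hX huv) as [a [_ [ha _]]].
  destruct (smooth_partials U Y u v hY huv) as [c [_ [hc _]]].
  split.
  - apply (eq_at_of_eq_right (fun s => X s v) (fun s => k ^ 2 * s) u r); try assumption.
    + exact (partial_u_continuity_pt X u v a ha).
    + reg.
    + intros e he; exact (proj1 (Hright e he)).
  - apply (eq_at_of_eq_right (fun s => Y s v) (fun _ => k * v) u r); try assumption.
    + exact (partial_u_continuity_pt Y u v c hc).
    + reg.
    + intros e he; exact (proj2 (Hright e he)).
Qed.

Lemma scale_exists : (exists u v, U u v) -> exists k, k <> 0 /\ mu2 * k ^ 3 = mu1.
Proof.
  intros [u [v huv]].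
  destruct (open2_right U u v U_open huv) as [r [hr Hr]].
  assert (Hreg : exists u', U u' v /\ v ^ 2 + u' <> 0).
  { destruct (Req_dec (v ^ 2 + u) 0) as [hP | hP]; [|now exists u].
    exists (u + r / 2); split; [apply Hr|]; lra. }
  destruct Hreg as [u' [hu' hP]].
  destruct (domain u' v hu') as [hv [_ [hy _]]].
  destruct (relations_off_singular u' v hu' hP) as [Ey _].
  exists (Y u' v / v); split.
  - unfold Rdiv; apply Rmult_integral_contrapositive_currified; [exact hy|].
    exact (Rinv_neq_0_compat v hv).
  - by_scaling Ey (/ v ^ 3).
Qed.

End Rigidity.

Theorem lemma6p1 (U : R -> R -> Prop) (X Y : R -> R -> R) (mu1 mu2 mu3 : R) :
  open2 U -> connected2 U ->
  local_diffeo_on U X Y ->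
  (forall u v, U u v ->
     v <> 0 /\ 3 * u - v ^ 2 <> 0 /\
     Y u v <> 0 /\ 3 * X u v - (Y u v) ^ 2 <> 0) ->
  mu1 <> 0 -> mu2 <> 0 -> mu3 <> 0 ->
  pullback_eq U X Y g1 mu1 ->
  pullback_eq U X Y g2 mu2 ->
  pullback_eq U X Y g3 mu3 ->
  exists k : R, k <> 0 /\
    forall u v, U u v -> X u v = k ^ 2 * u /\ Y u v = k * v.
Proof.
  intros hU _ hdiffeo hdom hmu1 hmu2 hmu3 h1 h2 h3.
  destruct (classic (exists u v, U u v)) as [hne | hempty].
  - destruct (scale_exists U X Y mu1 mu2 mu3 hU hdiffeo hdom hmu1 hmu2 hmu3 h1 h2 h3 hne)
      as [k [hk Hk]].
    exists k; split; [exact hk|].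
    exact (dilation_on U X Y mu1 mu2 mu3 hU hdiffeo hdom hmu1 hmu2 hmu3 h1 h2 h3 k Hk).
  - exists 1; split; [lra|].
    intros u v huv; exfalso; apply hempty; exists u, v; exact huv.
Qed.
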